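(* Let $G>I$ be a finite group with $Z(G)=I$ and let $\sigma_1,\sigma_2\in G$ with $G=\langle\sigma_1,\sigma_2\rangle$, $o(\sigma_1\sigma_2)=2$ and $[\sigma_1]=[\sigma_2]=:C$ (i.e. $\sigma_1,\sigma_2$ conjugate). Put $e_1=[\sigma_1,\sigma_1,\sigma_2,\sigma_1\sigma_2\sigma_1^{-1}]$, $e_2=[\sigma_1,\sigma_2\sigma_1\sigma_2^{-1},\sigma_2,\sigma_2]$, $e_3=[\sigma_1,\sigma_2,\sigma_1,\sigma_2]$, $e_4=[\sigma_1,\sigma_2,\sigma_2^{-1}\sigma_1\sigma_2,\sigma_1\sigma_2\sigma_1^{-1}]$, $e_5=[\sigma_1,\sigma_2,\sigma_2,\sigma_2^{-1}\sigma_1\sigma_2]$, $e_6=[\sigma_1,\sigma_2,\sigma_1\sigma_2\sigma_1^{-1},\sigma_1]$, all in $\Sigma^i(C,C,C,C)$. Then $Z^{sy}=\{e_1,\dots,e_6\}$ is an orbit of length $6$ under the group $B_4^{sy}$ of permutations of $\Sigma^i(C,C,C,C)$ generated by $\beta_{12},\beta_{13},\beta_{14},\beta_3,\eta_{23},\eta_{234}$, and, identifying $e_i$ with $i$, $\rho_4(\beta_{12})=(1)(2)(3,4)(5,6)$, $\rho_4(\beta_{13})=(1,2)(3)(4)(5,6)$, $\rho_4(\beta_{14})=(1,2)(3,4)(5)(6)$, $\rho_4(\beta_3)=(1,3,2,4)(5)(6)$, $\rho_4(\eta_{23})=(1,4)(2,3)(5,6)$, $\rho_4(\eta_{234})=(1,6,4)(2,5,3)$;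 moreover $\rho_4(B_4)\cong C_2\times C_2<A_6$ and $\rho_4(B_4^{sy})\cong\rho_4(T)\cong S_4<S_6$ for $T=\langle\beta_3,\eta_{23},\eta_{234}\rangle$, and $g_{Z^{sy}}=0$.
   Context: $\iota$ is the identity, $I$ the trivial group. $\Sigma^i(C_1,\dots,C_4)$ is the set of $G$-conjugacy classes $[\sigma_1,\dots,\sigma_4]$ (simultaneous conjugation) of tuples with $\sigma_j\in C_j$, $\langle\sigma_1,\dots,\sigma_4\rangle=G$, $\sigma_1\sigma_2\sigma_3\sigma_4=\iota$. Braids act from the right: $[\underline{\sigma}]^{\beta_2}=[\sigma_1\sigma_2\sigma_1^{-1},\sigma_1,\sigma_3,\sigma_4]$, $[\underline{\sigma}]^{\beta_3}=[\sigma_1,\sigma_2\sigma_3\sigma_2^{-1},\sigma_2,\sigma_4]$, $[\underline{\sigma}]^{\beta_4}=[\sigma_1,\sigma_2,\sigma_3\sigma_4\sigma_3^{-1},\sigma_3]$; $\beta_{12}=\beta_2^2$, $\beta_{13}=\beta_2^{-1}\beta_3^2\beta_2$, $\beta_{14}=\beta_2^{-1}\beta_3^{-1}\beta_4^2\beta_3\beta_2$; $B_4$ is the pure braid group generated by $\beta_{12},\beta_{13},\beta_{14},\beta_{23}=\beta_3^2,\beta_{24}=\beta_3^{-1}\beta_4^2\beta_3,\beta_{34}=\beta_4^2$. The topological automorphisms act on $\Sigma^i(C,C,C,C)$ by $[\underline{\sigma}]^{\eta_{23}}=[\sigma_2^{-1}\sigma_1\sigma_2,\sigma_3,\sigma_4\sigma_2\sigma_4^{-1},\sigma_4]$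 and $[\underline{\sigma}]^{\eta_{234}}=[\sigma_1,\sigma_2\sigma_3\sigma_2^{-1},\sigma_2\sigma_4\sigma_2^{-1},\sigma_2]$. $\rho_4$ denotes the induced permutation representation on $Z^{sy}$. The genus of an orbit $Z^{sy}$ (for the symmetry group $\langle(2,3),(2,3,4)\rangle$) is $g_{Z^{sy}}=1-|Z^{sy}|+\frac12(3|Z^{sy}|-z_3-z_{23}-z_{234})$, where $z_3,z_{23},z_{234}$ are the numbers of cycles (fixed points included) of $\rho_4(\beta_3),\rho_4(\eta_{23}),\rho_4(\eta_{234})$ on $Z^{sy}$. *)

From HB Require Import structures.
From mathcomp Require Import all_boot all_order all_algebra all_fingroup all_solvable.
Set Implicit Arguments. Unset Strict Implicit. Unset Printing Implicit Defensive.
Import GRing.Theory.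
Local Open Scope group_scope.

Section Braids.
Variable gT : finGroupType.

Definition T4 := (gT * gT * gT * gT)%type.

Definition conj4 (s : T4) (g : gT) : T4 :=
  let: (a, b, c, d) := s in (a ^ g, b ^ g, c ^ g, d ^ g).

(* the G-class [s1,s2,s3,s4] of a tuple under simultaneous conjugation *)
Definition cls (G : {set gT}) (s : T4) : {set T4} := [set conj4 s g | g in G].

Definition Sigma (G C : {set gT}) : {set {set T4}} :=
  [set cls G s | s in [set s : T4 |
     let: (a, b, c, d) := s in
     [&& a \in C, b \in C, c \in C, d \in C,
         <<[set a; b; c; d]>> == G & a * b * c * d == 1]]].

Definition b2 (s : T4) : T4 := let: (a, b, c, d) := s in (a * b * a^-1, a, c, d).
Definition b3 (s : T4) : T4 := let: (a, b, c, d) := s in (a, b * c * b^-1, b, d).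
Definition b4 (s : T4) : T4 := let: (a, b, c, d) := s in (a, b, c * d * c^-1, c).
Definition h23 (s : T4) : T4 :=
  let: (a, b, c, d) := s in (b^-1 * a * b, c, d * b * d^-1, d).
Definition h234 (s : T4) : T4 :=
  let: (a, b, c, d) := s in (a, b * c * b^-1, b * d * b^-1, b).

Definition b2i (s : T4) : T4 := let: (x, y, c, d) := s in (y, y^-1 * x * y, c, d).
Definition b3i (s : T4) : T4 := let: (a, x, y, d) := s in (a, y, y^-1 * x * y, d).
Definition b4i (s : T4) : T4 := let: (a, b, x, y) := s in (a, b, y, y^-1 * x * y).
Definition h23i (s : T4) : T4 :=
  let: (x, y, z, w) := s in
  ((w^-1 * z * w) * x * (w^-1 * z * w)^-1, w^-1 * z * w, y, w).
Definition h234i (s : T4) : T4 :=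
  let: (a, y, z, w) := s in (a, w, w^-1 * y * w, w^-1 * z * w).

Lemma b2K : cancel b2 b2i.
Proof. by case=> [[[a b] c] d] /=; rewrite !mulgA mulVg mul1g mulgKV. Qed.
Lemma b3K : cancel b3 b3i.
Proof. by case=> [[[a b] c] d] /=; rewrite !mulgA mulVg mul1g mulgKV. Qed.
Lemma b4K : cancel b4 b4i.
Proof. by case=> [[[a b] c] d] /=; rewrite !mulgA mulVg mul1g mulgKV. Qed.
Lemma h23K : cancel h23 h23i.
Proof.
case=> [[[a b] c] d] /=.
have E : d^-1 * (d * b * d^-1) * d = b by rewrite !mulgA mulVg mul1g mulgKV.
by rewrite E !mulgA mulgV mul1g mulgK.
Qed.
Lemma h234K : cancel h234 h234i.
Proof. by case=> [[[a b] c] d] /=; rewrite !mulgA !mulVg !mul1g !mulgKV. Qed.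

(* induced permutations of the set of classes (acting on all of {set T4};
   Sigma is a union of such classes and is stable) *)
Definition bperm (f : T4 -> T4) (fi : injective f) : {perm {set T4}} :=
  perm (imset_inj fi).

Definition P2 := bperm (can_inj b2K).
Definition P3 := bperm (can_inj b3K).
Definition P4 := bperm (can_inj b4K).
Definition eta23 := bperm (can_inj h23K).
Definition eta234 := bperm (can_inj h234K).

(* braids act from the right; in {perm _}, (p * q) x = q (p x) *)
Definition beta12 := P2 * P2.
Definition beta13 := P2^-1 * (P3 * P3) * P2.
Definition beta14 := P2^-1 * P3^-1 * (P4 * P4) * P3 * P2.
Definition beta23 := P3 * P3.
Definition beta24 := P3^-1 * (P4 * P4) * P3.
Definition beta34 := P4 * P4.

Definition B4 : {group {perm {set T4}}} :=
  <<[set beta12; beta13; beta14; beta23; beta24; beta34]>>%G.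
Definition B4sy : {group {perm {set T4}}} :=
  <<[set beta12; beta13; beta14; P3; eta23; eta234]>>%G.
Definition Tgrp : {group {perm {set T4}}} := <<[set P3; eta23; eta234]>>%G.

(* rho_4 restricted to the invariant set Z: the permutation representation
   rho_4(H) is (restr_perm Z) @* H *)
Definition ncycles (Z : {set {set T4}}) (p : {perm {set T4}}) : nat :=
  #|[set porbit p x | x in Z]|.

End Braids.

Definition genus (nZ z3 z23 z234 : nat) : rat :=
  (1 - nZ%:R + (3 * nZ%:R - z3%:R - z23%:R - z234%:R) / 2)%R.

From HB Require Import structures.
From mathcomp Require Import all_boot all_order all_algebra all_fingroup all_solvable.
Set Implicit Arguments. Unset Strict Implicit. Unset Printing Implicit Defensive.
Local Open Scope group_scope.

(* Write s2 = s1^-1 t, where t = s1 s2 is an involution.  Each of beta_3, eta_23,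
   eta_234, beta_12, beta_13, beta_14 (and beta_4) maps the tuple of every e_i to
   an explicit G-conjugate of the tuple of some e_j, which gives the tables and the
   stability of Z.  The six classes are distinct because the pattern of equal
   entries of a tuple is a class invariant, and it already differs on the six
   tuples as soon as s1 and s2 do not commute (which Z(G) = 1 < G forces).
   Labelling e_1, ..., e_6 by the six 4-cycles of S_4, rho_4(beta_3), rho_4(eta_23)
   and rho_4(eta_234) become conjugation by a 4-cycle, a transposition and a
   3-cycle, which generate S_4, and S_4 acts faithfully on its 4-cycles; the pure
   braids act as conjugation by the three double transpositions, so rho_4(B_4) is
   a Klein four group of squares, hence of even permutations.  The genus comes
   from the cycle counts 3, 3 and 2. *)

Ltac split_pairs := repeat match goal with |- prod _ _ => split end.

Section ClassAction.
Variables (gT : finGroupType) (G : {group gT}).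
Implicit Types (s : T4 gT) (f : T4 gT -> T4 gT).

Definition conj_equivariant f := forall s g, f (conj4 s g) = conj4 (f s) g.

Lemma conj4M s g h : conj4 (conj4 s g) h = conj4 s (g * h).
Proof. by case: s => [[[x y] z] w] /=; rewrite !conjgM. Qed.

Lemma cls_conj4 s h : h \in G -> cls G (conj4 s h) = cls G s.
Proof.
move=> Gh; apply/setP => u; apply/imsetP/imsetP => -[g Gg ->].
  by exists (h * g); rewrite ?groupM // conj4M.
by exists (h^-1 * g); rewrite ?groupM ?groupV // conj4M mulKVg.
Qed.

Lemma cls_eq_conj4 s s' h : h \in G -> s = conj4 s' h -> cls G s = cls G s'.
Proof. by move=> Gh ->; rewrite cls_conj4. Qed.

Lemma bperm_cls f (f_inj : injective f) s :
  conj_equivariant f -> bperm f_inj (cls G s) = cls G (f s).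
Proof. by move=> fJ; rewrite permE -imset_comp; apply: eq_imset => g /=. Qed.

Lemma bpermV_cls f f' (f_inj : injective f) s :
  conj_equivariant f -> cancel f' f -> (bperm f_inj)^-1 (cls G s) = cls G (f' s).
Proof. by move=> fJ f'K; rewrite -{1}[s]f'K -(bperm_cls _ _ fJ) permK. Qed.

Lemma b2_equivariant : conj_equivariant (@b2 gT).
Proof. by move=> [[[x y] z] w] g /=; rewrite !conjMg conjVg. Qed.

Lemma b3_equivariant : conj_equivariant (@b3 gT).
Proof. by move=> [[[x y] z] w] g /=; rewrite !conjMg conjVg. Qed.

Lemma b4_equivariant : conj_equivariant (@b4 gT).
Proof. by move=> [[[x y] z] w] g /=; rewrite !conjMg conjVg. Qed.

Lemma h23_equivariant : conj_equivariant (@h23 gT).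
Proof. by move=> [[[x y] z] w] g /=; rewrite !conjMg !conjVg. Qed.

Lemma h234_equivariant : conj_equivariant (@h234 gT).
Proof. by move=> [[[x y] z] w] g /=; rewrite !conjMg !conjVg. Qed.

Lemma b2iK : cancel (@b2i gT) (@b2 gT).
Proof. by case=> [[[x y] z] w] /=; rewrite !mulgA mulgK mulgV mul1g. Qed.

Lemma b3iK : cancel (@b3i gT) (@b3 gT).
Proof. by case=> [[[x y] z] w] /=; rewrite !mulgA mulgK mulgV mul1g. Qed.

Lemma P3_cls s : P3 gT (cls G s) = cls G (b3 s).
Proof. exact: bperm_cls b3_equivariant. Qed.

Lemma P4_cls s : P4 gT (cls G s) = cls G (b4 s).
Proof. exact: bperm_cls b4_equivariant. Qed.

Lemma eta23_cls s : eta23 gT (cls G s) = cls G (h23 s).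
Proof. exact: bperm_cls h23_equivariant. Qed.

Lemma eta234_cls s : eta234 gT (cls G s) = cls G (h234 s).
Proof. exact: bperm_cls h234_equivariant. Qed.

Lemma beta12_cls s : beta12 gT (cls G s) = cls G (b2 (b2 s)).
Proof. by rewrite permM !(bperm_cls _ _ b2_equivariant). Qed.

Lemma beta13_cls s : beta13 gT (cls G s) = cls G (b2 (b3 (b3 (b2i s)))).
Proof.
rewrite !permM (bpermV_cls _ _ b2_equivariant b2iK).
by rewrite !(bperm_cls _ _ b3_equivariant) (bperm_cls _ _ b2_equivariant).
Qed.

Lemma beta14_cls s :
  beta14 gT (cls G s) = cls G (b2 (b3 (b4 (b4 (b3i (b2i s)))))).
Proof.
rewrite !permM (bpermV_cls _ _ b2_equivariant b2iK).
rewrite (bpermV_cls _ _ b3_equivariant b3iK) !(bperm_cls _ _ b4_equivariant).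
by rewrite (bperm_cls _ _ b3_equivariant) (bperm_cls _ _ b2_equivariant).
Qed.

Definition eq_pattern s : seq bool :=
  let: (x1, x2, x3, x4) := s in
  [:: x1 == x2; x1 == x3; x1 == x4; x2 == x3; x2 == x4; x3 == x4].

Lemma eq_pattern_conj4 s g : eq_pattern (conj4 s g) = eq_pattern s.
Proof. by case: s => [[[x1 x2] x3] x4] /=; rewrite !(inj_eq (@conjg_inj _ g)). Qed.

Lemma cls_eq_pattern s s' : cls G s = cls G s' -> eq_pattern s = eq_pattern s'.
Proof.
move=> eq_ss'; have /imsetP[g _ ->] : s' \in cls G s.
  rewrite eq_ss'; apply/imsetP; exists 1 => //.
  by case: s' {eq_ss'} => [[[x1 x2] x3] x4]; rewrite /= !conjg1.
by rewrite eq_pattern_conj4.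
Qed.

End ClassAction.

Section NonCommuting.
Variables (gT : finGroupType) (x y : gT).
Hypothesis nxy : ~ commute x y.

Lemma noncommuting_conjugates_neq :
  ((x == y) = false) * ((y == x) = false) * ((x == x * y * x^-1) = false) *
  ((x * y * x^-1 == x) = false) * ((y == x * y * x^-1) = false) *
  ((x == y * x * y^-1) = false) * ((y * x * y^-1 == y) = false) *
  ((x == y^-1 * x * y) = false) * ((y == y^-1 * x * y) = false).
Proof.
have xy : (x == y) = false by apply/negbTE; apply: contra_notN nxy => /eqP <-.
have x_xyx : x != x * y * x^-1.
  by apply/eqP => /(congr1 (mulg^~ x)); rewrite mulgKV => /mulgI/eqP; rewrite xy.
have y_xyx : y != x * y * x^-1.
  by apply/eqP => /(congr1 (mulg^~ x)); rewrite mulgKV => /esym; apply: nxy.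
have x_yxy : x != y * x * y^-1.
  by apply/eqP => /(congr1 (mulg^~ y)); rewrite mulgKV; apply: nxy.
have yxy_y : y * x * y^-1 != y.
  by apply/eqP => /(congr1 (mulg^~ y)); rewrite mulgKV => /mulgI/eqP; rewrite xy.
have x_yxy' : x != y^-1 * x * y.
  by apply/eqP => /(congr1 (mulg y)); rewrite mulgA mulKVg => /esym; apply: nxy.
have y_yxy' : y != y^-1 * x * y.
  by apply/eqP => /(congr1 (mulg y)); rewrite mulgA mulKVg => /mulIg/esym/eqP; rewrite xy.
by split_pairs; apply/negbTE; rewrite ?xy // eq_sym ?xy.
Qed.

End NonCommuting.

Lemma gen2_center1_noncommuting (gT : finGroupType) (G : {group gT}) x y :
  <<[set x; y]>> = G -> 'Z(G) = 1 -> G :!=: 1 -> x * y != y * x.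
Proof.
move=> genG ZG; apply: contra => /eqP cxy; rewrite -ZG; apply/eqP/esym/center_idP.
by rewrite -genG abelian_gen; apply/centsP => u /set2P[]-> v /set2P[]->.
Qed.

Lemma mem_class_conj (gT : finGroupType) (G : {group gT}) x0 x y :
    x \in x0 ^: G -> y \in G ->
  (y * x * y^-1 \in x0 ^: G) && (y^-1 * x * y \in x0 ^: G).
Proof.
move=> /class_eqP <- Gy.
have -> : y * x * y^-1 = x ^ y^-1 by rewrite conjgE invgK mulgA.
by rewrite -mulgA -conjgE !memJ_class ?groupV.
Qed.

Lemma astabs_seq (T : finType) (p : {perm T}) (s : seq T) :
  {subset map p s <= s} -> p \in 'N([set x in s] | 'P).
Proof.
move=> ps_s; have sub : p @: [set x in s] \subset [set x in s].
  by apply/subsetP => _ /imsetP[x sx ->]; rewrite !inE in sx *; apply/ps_s/map_f.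
have p_s : p @: [set x in s] = [set x in s].
  by apply/eqP; rewrite eqEcard sub card_imset ?leqnn //; apply: perm_inj.
by apply/astabsP => x; rewrite /= apermE -{1}p_s mem_imset //; apply: perm_inj.
Qed.

Ltac mem_perm_seq := move=> ?; rewrite !inE;
  by do ![case/orP=> [/eqP->|] | move/eqP->]; rewrite eqxx ?orbT.

Lemma morphim_gen_eq (aT bT rT : finGroupType) (D : {group aT}) (E : {group bT})
    (f : {morphism D >-> rT}) (h : {morphism E >-> rT}) (A : {set aT}) (B : {set bT}) :
  A \subset D -> B \subset E -> f @: A = h @: B -> f @* <<A>> = h @* <<B>>.
Proof. by move=> sAD sBE fAB; rewrite !morphim_gen // !morphimEsub // fAB. Qed.

Lemma porbit_step (T : finType) (s : {perm T}) x : porbit s (s x) = porbit s x.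
Proof. by rewrite -{2}[s]expg1 porbit_perm. Qed.

Lemma porbit_stable_neq (T : finType) (s : {perm T}) (A : {set T}) x y :
  {in A, forall z, s z \in A} -> x \in A -> y \notin A -> porbit s x != porbit s y.
Proof.
move=> sA xA; apply: contra; rewrite eq_sym eq_porbit_mem => /porbitP[i ->].
by elim: i => [|i IHi]; rewrite ?expg0 ?perm1 // expgSr permM sA.
Qed.

Lemma card_set3 (T : finType) (x y z : T) :
  x != y -> x != z -> y != z -> #|[set x; y; z]| = 3.
Proof.
move=> xy xz yz; rewrite -[3]/(size [:: x; y; z]) -(card_uniqP _); last first.
  by rewrite /= !inE negb_or xy xz yz.
by apply: eq_card => w; rewrite !inE -!orbA.
Qed.

Lemma odd_perm_sqr (T : finType) (s : {perm T}) : ~~ odd_perm (s * s).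
Proof. by rewrite odd_permM addbb. Qed.

Section KleinFour.
Variables (gT : finGroupType) (x y : gT).
Hypotheses (xx : x * x = 1) (yy : y * y = 1) (cxy : commute x y).

Lemma klein_four_gen : <<[set x; y]>> = [set 1; x; y; x * y].
Proof.
have yxz z : y * (x * z) = x * (y * z) by rewrite !mulgA cxy.
have xxz z : x * (x * z) = z by rewrite mulgA xx mul1g.
have yyz z : y * (y * z) = z by rewrite mulgA yy mul1g.
have V_group : group_set [set 1; x; y; x * y].
  apply/group_setP; split=> [|u v]; first by rewrite !inE eqxx.
  rewrite !inE -!orbA => /or4P[]/eqP-> /or4P[]/eqP->; rewrite -?mulgA;
    do ?rewrite ?mul1g ?mulg1 ?yxz -?cxy ?xxz ?yyz ?xx ?yy;
    by rewrite ?eqxx ?orbT.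
apply/eqP; rewrite eqEsubset (gen_subG _ (Group V_group)); apply/andP; split.
  by apply/subsetP => z /set2P[]->; rewrite !inE eqxx ?orbT.
apply/subsetP => z; rewrite !inE -!orbA => /or4P[]/eqP->;
  by rewrite ?group1 ?groupM ?mem_gen ?inE ?eqxx ?orbT.
Qed.

Lemma klein_four_isog :
  x != 1 -> y != 1 -> x != y -> <<[set x; y]>> \isog [set: 'Z_2 * 'Z_2].
Proof.
move=> x_neq1 y_neq1 x_neqy.
have Z22_abelem : 2.-abelem [set: 'Z_2 * 'Z_2].
  apply/abelemP => //; split=> [|[u v] _].
    by apply/centsP => -[u v] _ [u' v'] _; congr (_, _); apply: Zp_mulgC.
  by rewrite expgS expg1; congr (_, _); apply/val_inj; [case: u | case: v] => -[|[|]].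
rewrite isog_sym (isog_abelem_card _ Z22_abelem) cardsT card_prod card_ord.
apply/andP; split.
  apply/abelemP => //; split=> [|z].
    by rewrite abelian_gen; apply/centsP => u /set2P[]-> v /set2P[]->.
  rewrite /= klein_four_gen !inE -!orbA expgS expg1 => /or4P[]/eqP->; rewrite ?mulg1 //.
  by rewrite -mulgA [y * (x * y)]mulgA -cxy -mulgA yy mulg1.
have x_neqxy : x != x * y by rewrite -{1}[x]mulg1 (inj_eq (mulgI x)) eq_sym.
have y_neqxy : y != x * y by rewrite -{1}[y]mul1g (inj_eq (mulIg y)) eq_sym.
have one_neqxy : 1 != x * y.
  by rewrite eq_sym -(inj_eq (mulgI x)) mulgA xx mul1g mulg1 eq_sym.
have V_uniq : uniq [:: 1; x; y; x * y].
  by rewrite /= !inE !negb_or eq_sym x_neq1 eq_sym y_neq1 x_neqy x_neqxy y_neqxy one_neqxy.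
rewrite /= klein_four_gen -[(2 * 2)%N]/(size [:: 1; x; y; x * y]) -(card_uniqP V_uniq).
by apply/eqP/eq_card => z; rewrite !inE -!orbA.
Qed.

End KleinFour.

(* The permutation [transport g] acts on the labels [ys] as conjugation by [g]
   acts on [cs], along the bijection [lab] between [cs] and [ys] given by
   matching positions; [c0] and [y0] are only default values for [nth]. *)
Section ConjugationTransport.
Variables (K : finGroupType) (Y : finType) (c0 : K) (y0 : Y) (cs : seq K) (ys : seq Y).
Hypotheses (cs_uniq : uniq cs) (ys_uniq : uniq ys) (size_cs : size cs = size ys).
Hypothesis csJ : forall c g, c \in cs -> c ^ g \in cs.

Definition lab c := nth y0 ys (index c cs).
Definition unlab y := nth c0 cs (index y ys).

Lemma mem_lab c : c \in cs -> lab c \in ys.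
Proof. by move=> csc; rewrite mem_nth // -size_cs index_mem. Qed.

Lemma mem_unlab y : y \in ys -> unlab y \in cs.
Proof. by move=> ysy; rewrite mem_nth // size_cs index_mem. Qed.

Lemma labK : {in cs, cancel lab unlab}.
Proof. by move=> c csc; rewrite /unlab index_uniq ?nth_index // -size_cs index_mem. Qed.

Lemma unlabK : {in ys, cancel unlab lab}.
Proof. by move=> y ysy; rewrite /lab index_uniq ?nth_index // size_cs index_mem. Qed.

Definition conj_along g y := if y \in ys then lab (unlab y ^ g) else y.

Lemma conj_alongK g : cancel (conj_along g) (conj_along g^-1).
Proof.
move=> y; rewrite /conj_along; have [ysy|ysNy] := boolP (y \in ys); last first.
  by rewrite (negbTE ysNy).
by rewrite mem_lab ?csJ ?mem_unlab // labK ?csJ ?mem_unlab // conjgK unlabK.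
Qed.

Definition transport g := perm (can_inj (conj_alongK g)).

Lemma transport_lab g c : c \in cs -> transport g (lab c) = lab (c ^ g).
Proof. by move=> csc; rewrite permE /conj_along mem_lab // labK. Qed.

Lemma transport_out g y : y \notin ys -> transport g y = y.
Proof. by move=> ysNy; rewrite permE /conj_along (negbTE ysNy). Qed.

Lemma transportM : {in [set: K] &, {morph transport : g h / g * h}}.
Proof.
move=> g h _ _; apply/permP => y; rewrite permM.
have [ysy|ysNy] := boolP (y \in ys); last by rewrite !transport_out.
by rewrite -(unlabK ysy) !transport_lab ?conjgM ?csJ ?mem_unlab.
Qed.

Canonical transport_morphism := Morphism transportM.

Lemma injm_transport :
  (forall g, {in cs, forall c, c ^ g = c} -> g = 1) -> 'injm transport_morphism.
Proof.
move=> faithful; apply/subsetP => g /mker/= g1; rewrite inE; apply/eqP/faithful.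
by move=> c csc; apply: (can_in_inj labK); rewrite ?csJ // -transport_lab // g1 perm1.
Qed.

Lemma restr_perm_transport (p : {perm Y}) g :
    p \in 'N([set y in ys] | 'P) -> map unlab (map p ys) = [seq c ^ g | c <- cs] ->
  restr_perm [set y in ys] p = transport g.
Proof.
move=> pN p_ys; apply/permP => y; have [ysy|ysNy] := boolP (y \in ys); last first.
  by rewrite (out_perm (restr_perm_on _ _)) ?inE // transport_out.
have ys_py : p y \in ys by have := astabs_act y pN; rewrite !inE ysy.
have ysZ : y \in [set y in ys] by rewrite inE.
rewrite restr_permE // -(unlabK ys_py) -{2}(unlabK ysy) transport_lab ?mem_unlab //.
have i_lt : index y ys < size ys by rewrite index_mem.
move/(congr1 (nth c0 ^~ (index y ys))): p_ys.
rewrite !(nth_map y0) ?(nth_map c0) ?size_map ?size_cs //.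
by rewrite (nth_index y0 ysy) => ->.
Qed.

End ConjugationTransport.

Definition o0 : 'I_4 := @Ordinal 4 0 isT.
Definition o1 : 'I_4 := @Ordinal 4 1 isT.
Definition o2 : 'I_4 := @Ordinal 4 2 isT.
Definition o3 : 'I_4 := @Ordinal 4 3 isT.

(* cijkl is the 4-cycle (i j k l), c132 the 3-cycle (1 3 2) and vij_kl the double
   transposition (i j)(k l); with (s * t) x = t (s x), they are products of the
   transpositions below. *)
Local Notation c0123 := (tperm o0 o1 * tperm o0 o2 * tperm o0 o3).
Local Notation c0321 := (tperm o0 o3 * tperm o0 o2 * tperm o0 o1).
Local Notation c0132 := (tperm o0 o1 * tperm o0 o3 * tperm o0 o2).
Local Notation c0231 := (tperm o0 o2 * tperm o0 o3 * tperm o0 o1).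
Local Notation c0213 := (tperm o0 o2 * tperm o0 o1 * tperm o0 o3).
Local Notation c0312 := (tperm o0 o3 * tperm o0 o1 * tperm o0 o2).
Local Notation c132 := (tperm o1 o3 * tperm o1 o2).
Local Notation v02_13 := (c0123 * c0123).
Local Notation v03_12 := (c0132 * c0132).
Local Notation v01_23 := (c0213 * c0213).

Definition cycles4 : seq 'S_4 := [:: c0123; c0321; c0132; c0231; c0213; c0312].

Ltac perm4_eq := apply/permP => -[[|[|[|[|//]]]] ?]; apply/val_inj;
  rewrite /conjg ?invMg ?tpermV ?perm1 ?permM ?perm1 !permE.
Ltac cycles4_conj := apply: (@eq_from_nth _ 1) => // -[|[|[|[|[|[|//]]]]]] _; perm4_eq.

Lemma cycles4_uniq : uniq cycles4.
Proof.
apply: (@map_uniq _ _ (fun c : 'S_4 => (val (c o0), val (c (c o0))))).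
by rewrite /= !permM !permE.
Qed.

Lemma conj_c0312 :
  [seq c ^ c0312 | c <- cycles4] = [:: c0132; c0231; c0321; c0123; c0213; c0312].
Proof. by cycles4_conj. Qed.

Lemma conj_t01 :
  [seq c ^ tperm o0 o1 | c <- cycles4] = [:: c0231; c0132; c0321; c0123; c0312; c0213].
Proof. by cycles4_conj. Qed.

Lemma conj_c132 :
  [seq c ^ c132 | c <- cycles4] = [:: c0312; c0213; c0321; c0123; c0132; c0231].
Proof. by cycles4_conj. Qed.

Lemma conj_c0123 :
  [seq c ^ c0123 | c <- cycles4] = [:: c0123; c0321; c0312; c0213; c0132; c0231].
Proof. by cycles4_conj. Qed.

Lemma conj_v02_13 :
  [seq c ^ v02_13 | c <- cycles4] = [:: c0123; c0321; c0231; c0132; c0312; c0213].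
Proof. by cycles4_conj. Qed.

Lemma conj_v03_12 :
  [seq c ^ v03_12 | c <- cycles4] = [:: c0321; c0123; c0132; c0231; c0312; c0213].
Proof. by cycles4_conj. Qed.

Lemma conj_v01_23 :
  [seq c ^ v01_23 | c <- cycles4] = [:: c0321; c0123; c0231; c0132; c0213; c0312].
Proof. by cycles4_conj. Qed.

Lemma S4_gen : <<[set c0312; tperm o0 o1; c132]>> = [set: 'S_4].
Proof.
apply/eqP; rewrite eqEsubset subsetT -(gen_tperm o0) gen_subG.
apply/subsetP => _ /imsetP[y _ ->].
have gen_t01 : tperm o0 o1 \in <<[set c0312; tperm o0 o1; c132]>>.
  by rewrite mem_gen // !inE eqxx orbT.
have gen_c132 : c132 \in <<[set c0312; tperm o0 o1; c132]>>.
  by rewrite mem_gen // !inE eqxx orbT.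
case: y => -[|[|[|[|//]]]] y_lt.
- by have -> : tperm o0 (Ordinal y_lt) = 1 by perm4_eq.
- by have -> : tperm o0 (Ordinal y_lt) = tperm o0 o1 by perm4_eq.
- have -> : tperm o0 (Ordinal y_lt) = tperm o0 o1 ^ (c132 * c132) by perm4_eq.
  by rewrite groupJ // groupM.
- have -> : tperm o0 (Ordinal y_lt) = tperm o0 o1 ^ c132 by perm4_eq.
  by rewrite groupJ.
Qed.

Lemma cycles4J c g : c \in cycles4 -> c ^ g \in cycles4.
Proof.
suff gN : g \in 'N([set c in cycles4]).
  by move=> cyc_c; have := memJ_norm c gN; rewrite !in_set cyc_c.
suff : <<[set c0312; tperm o0 o1; c132]>> \subset 'N([set c in cycles4]).
  by move/subsetP; apply; rewrite S4_gen inE.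
rewrite gen_subG; apply/subsetP => s; rewrite !inE -!orbA => gens_s.
apply/subsetP => _ /imsetP[d cyc_d ->]; rewrite !in_set in cyc_d *.
have : {subset [seq c ^ s | c <- cycles4] <= cycles4}.
  by case/or3P: gens_s => /eqP->; rewrite ?conj_c0312 ?conj_t01 ?conj_c132; mem_perm_seq.
by move=> sub; apply: sub (map_f _ cyc_d).
Qed.

Lemma ord4_enum (x : 'I_4) : x \in [:: o0; o1; o2; o3].
Proof. by case: x => -[|[|[|[|//]]]]. Qed.

Lemma conj_cycles4_faithful g : {in cycles4, forall c, c ^ g = c} -> g = 1.
Proof.
move=> fix_g; have g_comm c x : c \in cycles4 -> g (c x) = c (g x).
  by move=> cyc_c; move/permP/(_ x): (conjgC c g); rewrite fix_g // !permM.
have cyc_c0123 : c0123 \in cycles4 by rewrite inE eqxx.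
have cyc_c0132 : c0132 \in cycles4 by rewrite !inE eqxx ?orbT.
(* 0 is the only point where c0123 and c0132 agree *)
have g0 : g o0 = o0.
  have : c0123 (g o0) = c0132 (g o0).
    by rewrite -!g_comm // !permM /tperm !permE.
  case: (g o0) => -[|[|[|[|//]]]] ?; rewrite !permM /tperm !permE => /(congr1 val)/eqP //= _.
  exact/val_inj.
have g1 : g o1 = o1 by move: (g_comm _ o0 cyc_c0123); rewrite g0 !permM /tperm !permE.
have g2 : g o2 = o2 by move: (g_comm _ o1 cyc_c0123); rewrite g1 !permM /tperm !permE.
have g3 : g o3 = o3 by move: (g_comm _ o2 cyc_c0123); rewrite g2 !permM /tperm !permE.
by apply/permP => x; rewrite perm1; move: (ord4_enum x); rewrite !inE => /or4P[]/eqP->.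
Qed.

Lemma klein_S4 : [/\ v02_13 * v02_13 = 1, v03_12 * v03_12 = 1, commute v02_13 v03_12
  & v02_13 * v03_12 = v01_23].
Proof. by split; perm4_eq. Qed.

Lemma klein_S4_neq : [&& v02_13 != 1, v03_12 != 1 & v02_13 != v03_12].
Proof.
by apply/and3P; split; apply/eqP => /permP/(_ o0)/(congr1 val)/eqP;
  rewrite ?perm1 !permM !permE.
Qed.

Lemma c0312_relations : c0312 * c0312 = v01_23 /\ v02_13 ^ c0312 = v03_12.
Proof. by split; perm4_eq. Qed.

(* The theorem's s1 and s2 are [a] and [b]; [t = a * b] is the involution. *)
Section Orbit.
Variables (gT : finGroupType) (G : {group gT}) (a t : gT).
Hypotheses (aG : a \in G) (tG : t \in G) (tt1 : t * t = 1) (nc : a * t != t * a).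
Hypotheses (genG : <<[set a; a^-1 * t]>> = G) (bC : a^-1 * t \in a ^: G).

Local Notation b := (a^-1 * t).
Local Notation e1 := (cls G (a, a, b, a * b * a^-1)).
Local Notation e2 := (cls G (a, b * a * b^-1, b, b)).
Local Notation e3 := (cls G (a, b, a, b)).
Local Notation e4 := (cls G (a, b, b^-1 * a * b, a * b * a^-1)).
Local Notation e5 := (cls G (a, b, b, b^-1 * a * b)).
Local Notation e6 := (cls G (a, b, a * b * a^-1, a)).
Local Notation Zseq := [:: e1; e2; e3; e4; e5; e6].
Local Notation Z := [set e1; e2; e3; e4; e5; e6].

Lemma invt : t^-1 = t.
Proof. by rewrite -[t^-1]mul1g -tt1 mulgK. Qed.

Lemma mulKt x : t * (t * x) = x.
Proof. by rewrite mulgA tt1 mul1g. Qed.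

Ltac group_simpl := rewrite /= /conjg ?invMg ?invgK ?invg1 ?invt -?mulgA;
  repeat progress rewrite ?mulKg ?mulKVg ?mulgV ?mulVg ?mulg1 ?mul1g ?mulKt ?tt1.
Tactic Notation "conj_by" uconstr(h) := refine (@cls_eq_conj4 _ G _ _ h _ _);
  [by rewrite ?groupM ?groupV ?aG ?tG | by group_simpl].
Ltac on_Z := apply: (@eq_from_nth _ e1) => // -[|[|[|[|[|[|//]]]]]] _.

Lemma P3_on_Z : map (P3 gT) Zseq = [:: e3; e4; e2; e1; e5; e6].
Proof.
on_Z; rewrite /= P3_cls;
  [conj_by a^-1 | conj_by a | conj_by 1 | conj_by 1 | conj_by 1 | conj_by a].
Qed.

Lemma eta23_on_Z : map (eta23 gT) Zseq = [:: e4; e3; e2; e1; e6; e5].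
Proof.
on_Z; rewrite /= eta23_cls;
  [conj_by 1 | conj_by (t * a * t * a) | conj_by b
  | conj_by (a * t) | conj_by b | conj_by t].
Qed.

Lemma eta234_on_Z : map (eta234 gT) Zseq = [:: e6; e5; e2; e1; e3; e4].
Proof.
on_Z; rewrite /= eta234_cls;
  [conj_by a^-1 | conj_by a | conj_by 1 | conj_by a | conj_by 1 | conj_by a].
Qed.

Lemma P4_on_Z : map (P4 gT) Zseq = [:: e1; e2; e6; e5; e3; e4].
Proof.
on_Z; rewrite /= P4_cls;
  [conj_by a | conj_by 1 | conj_by 1 | conj_by 1 | conj_by 1 | conj_by 1].
Qed.

Lemma beta12_on_Z : map (beta12 gT) Zseq = [:: e1; e2; e4; e3; e6; e5].
Proof.
on_Z; rewrite /= beta12_cls;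
  [conj_by 1 | conj_by (b * b) | conj_by t | conj_by t | conj_by t | conj_by t].
Qed.

Lemma beta13_on_Z : map (beta13 gT) Zseq = [:: e2; e1; e3; e4; e6; e5].
Proof.
on_Z; rewrite /= beta13_cls;
  [conj_by (a^-1 * t * a^-1) | conj_by (a * t * a) | conj_by (b * b)
  | conj_by 1 | conj_by b | conj_by (t * a)].
Qed.

Lemma beta14_on_Z : map (beta14 gT) Zseq = [:: e2; e1; e4; e3; e5; e6].
Proof.
on_Z; rewrite /= beta14_cls;
  [conj_by b | conj_by (t * a) | conj_by (t * a)
  | conj_by b | conj_by (b * b) | conj_by 1].
Qed.

Lemma not_commute_ab : ~ commute a b.
Proof.
move=> cab; case/eqP: nc; move: cab; rewrite /commute mulKVg => {1}->.
by rewrite mulgA mulKVg.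
Qed.

Lemma conj_ab_neq_conj_baV : b^-1 * a * b != a * b * a^-1.
Proof.
apply/eqP; rewrite !invMg invgK invt -!mulgA !mulKVg => /mulgI ata.
case/eqP: nc; have t_aa : t = a^-1 * a^-1 by rewrite -[t](mulKg a) ata.
by rewrite ata t_aa mulgKV.
Qed.

Lemma Z_neq :
  (((e1 == e2) = false) * ((e1 == e3) = false) * ((e1 == e4) = false) *
  ((e1 == e5) = false) * ((e1 == e6) = false) * ((e2 == e3) = false) *
  ((e2 == e4) = false) * ((e2 == e5) = false) * ((e2 == e6) = false) *
  ((e3 == e4) = false) * ((e3 == e5) = false) * ((e3 == e6) = false) *
  ((e4 == e5) = false) * ((e4 == e6) = false) * ((e5 == e6) = false))%type.
Proof.
have neqE := noncommuting_conjugates_neq not_commute_ab.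
have conjE := negbTE conj_ab_neq_conj_baV.
by split_pairs; apply/negbTE/eqP => /cls_eq_pattern /=; rewrite !neqE ?conjE !eqxx => -[=].
Qed.

Lemma Zseq_uniq : uniq Zseq.
Proof. by rewrite /= !inE !Z_neq. Qed.

Lemma Z_seq : Z = [set x in Zseq].
Proof. by apply/setP => x; rewrite !inE -!orbA. Qed.

Lemma card_Z : #|Z| = 6.
Proof. by rewrite Z_seq cardsE (card_uniqP Zseq_uniq). Qed.

Lemma cls_in_Sigma x1 x2 x3 x4 :
    x1 \in a ^: G -> x2 \in a ^: G -> x3 \in a ^: G -> x4 \in a ^: G ->
    a \in [set x1; x2; x3; x4] -> b \in [set x1; x2; x3; x4] -> x1 * x2 * x3 * x4 = 1 ->
  cls G (x1, x2, x3, x4) \in Sigma G (a ^: G).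
Proof.
move=> C1 C2 C3 C4 aX bX prod1; apply/imsetP; exists (x1, x2, x3, x4) => //.
rewrite inE /= C1 C2 C3 C4 prod1 eqxx andbT /= eqEsubset gen_subG; apply/andP; split.
  have classG := subsetP (class_subG aG (subxx G)).
  by apply/subsetP => y; rewrite !inE -!orbA => /or4P[]/eqP->; apply: classG.
by rewrite -{1}genG genS //; apply/subsetP => y /set2P[]->.
Qed.

Lemma Z_sub_Sigma : Z \subset Sigma G (a ^: G).
Proof.
have aC := class_refl G a; have bG : b \in G by rewrite groupM ?groupV.
have /andP[abaC _] := mem_class_conj bC aG.
have /andP[babC b'abC] := mem_class_conj aC bG.
apply/subsetP => X; rewrite !inE -!orbA.
by do ![case/orP=> [/eqP->|] | move/eqP->]; apply: cls_in_Sigma;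
  rewrite ?inE ?eqxx ?orbT //; group_simpl.
Qed.

Lemma P3_astabs : P3 gT \in 'N(Z | 'P).
Proof. by rewrite Z_seq; apply: astabs_seq; rewrite P3_on_Z; mem_perm_seq. Qed.

Lemma eta23_astabs : eta23 gT \in 'N(Z | 'P).
Proof. by rewrite Z_seq; apply: astabs_seq; rewrite eta23_on_Z; mem_perm_seq. Qed.

Lemma eta234_astabs : eta234 gT \in 'N(Z | 'P).
Proof. by rewrite Z_seq; apply: astabs_seq; rewrite eta234_on_Z; mem_perm_seq. Qed.

Lemma P4_astabs : P4 gT \in 'N(Z | 'P).
Proof. by rewrite Z_seq; apply: astabs_seq; rewrite P4_on_Z; mem_perm_seq. Qed.

Lemma beta12_astabs : beta12 gT \in 'N(Z | 'P).
Proof. by rewrite Z_seq; apply: astabs_seq; rewrite beta12_on_Z; mem_perm_seq. Qed.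

Lemma beta13_astabs : beta13 gT \in 'N(Z | 'P).
Proof. by rewrite Z_seq; apply: astabs_seq; rewrite beta13_on_Z; mem_perm_seq. Qed.

Lemma beta14_astabs : beta14 gT \in 'N(Z | 'P).
Proof. by rewrite Z_seq; apply: astabs_seq; rewrite beta14_on_Z; mem_perm_seq. Qed.

Lemma B4_astabs : B4 gT \subset 'N(Z | 'P).
Proof.
rewrite gen_subG !subUset !sub1set beta12_astabs beta13_astabs beta14_astabs /=.
by rewrite /beta23 /beta24 /beta34 !groupM ?groupV ?P3_astabs ?P4_astabs.
Qed.

Lemma B4sy_astabs : B4sy gT \subset 'N(Z | 'P).
Proof.
by rewrite gen_subG !subUset !sub1set beta12_astabs beta13_astabs beta14_astabs
  P3_astabs eta23_astabs eta234_astabs.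
Qed.

(* rho_4 seen as conjugation on the 4-cycles of S_4, e_i being labelled by the
   i-th entry of [cycles4]. *)
Local Notation psi := (transport_morphism 1 e1 cycles4_uniq Zseq_uniq (erefl 6) cycles4J).

Lemma restr_psi p g :
    p \in 'N(Z | 'P) -> map (unlab 1 cycles4 Zseq) (map p Zseq) = [seq c ^ g | c <- cycles4] ->
  restr_perm Z p = psi g.
Proof. by rewrite Z_seq; apply: restr_perm_transport. Qed.

Lemma restr_P3 : restr_perm Z (P3 gT) = psi c0312.
Proof.
by apply: restr_psi P3_astabs _; rewrite P3_on_Z conj_c0312 /unlab /= !Z_neq !eqxx.
Qed.

Lemma restr_eta23 : restr_perm Z (eta23 gT) = psi (tperm o0 o1).
Proof.
by apply: restr_psi eta23_astabs _; rewrite eta23_on_Z conj_t01 /unlab /= !Z_neq !eqxx.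
Qed.

Lemma restr_eta234 : restr_perm Z (eta234 gT) = psi c132.
Proof.
by apply: restr_psi eta234_astabs _; rewrite eta234_on_Z conj_c132 /unlab /= !Z_neq !eqxx.
Qed.

Lemma restr_P4 : restr_perm Z (P4 gT) = psi c0123.
Proof.
by apply: restr_psi P4_astabs _; rewrite P4_on_Z conj_c0123 /unlab /= !Z_neq !eqxx.
Qed.

Lemma restr_beta12 : restr_perm Z (beta12 gT) = psi v02_13.
Proof.
by apply: restr_psi beta12_astabs _; rewrite beta12_on_Z conj_v02_13 /unlab /= !Z_neq !eqxx.
Qed.

Lemma restr_beta13 : restr_perm Z (beta13 gT) = psi v03_12.
Proof.
by apply: restr_psi beta13_astabs _; rewrite beta13_on_Z conj_v03_12 /unlab /= !Z_neq !eqxx.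
Qed.

Lemma restr_beta14 : restr_perm Z (beta14 gT) = psi v01_23.
Proof.
by apply: restr_psi beta14_astabs _; rewrite beta14_on_Z conj_v01_23 /unlab /= !Z_neq !eqxx.
Qed.

Lemma restr_beta23 : restr_perm Z (beta23 gT) = psi v01_23.
Proof.
rewrite /beta23 [LHS]morphM ?P3_astabs //= restr_P3.
by rewrite -morphM ?inE // (proj1 c0312_relations).
Qed.

Lemma restr_beta24 : restr_perm Z (beta24 gT) = psi v03_12.
Proof.
have -> : beta24 gT = (P4 gT * P4 gT) ^ P3 gT by rewrite conjgE mulgA.
rewrite [LHS]morphJ ?groupM ?P3_astabs ?P4_astabs // [in LHS]morphM ?P4_astabs //=.
by rewrite restr_P3 restr_P4 -morphM ?inE // -morphJ ?inE // (proj2 c0312_relations).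
Qed.

Lemma restr_beta34 : restr_perm Z (beta34 gT) = psi v02_13.
Proof. by rewrite /beta34 [LHS]morphM ?P4_astabs //= restr_P4 -morphM ?inE. Qed.

Lemma restr_Tgrp : restr_perm Z @* Tgrp gT = psi @* [set: 'S_4].
Proof.
transitivity (psi @* <<[set c0312; tperm o0 o1; c132]>>); last by rewrite S4_gen.
apply: (morphim_gen_eq _ (subsetT _)).
  by rewrite !subUset !sub1set P3_astabs eta23_astabs eta234_astabs.
by rewrite !imsetU !imset_set1 /= restr_P3 restr_eta23 restr_eta234.
Qed.

Lemma restr_B4sy : restr_perm Z @* B4sy gT = psi @* [set: 'S_4].
Proof.
have S4_gen6 : <<[set v02_13; v03_12; v01_23; c0312; tperm o0 o1; c132]>> = [set: 'S_4].
  apply/eqP; rewrite eqEsubset subsetT -{1}S4_gen genS //.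
  by rewrite !subUset !sub1set !inE !eqxx ?orbT.
transitivity (psi @* <<[set v02_13; v03_12; v01_23; c0312; tperm o0 o1; c132]>>).
  apply: (morphim_gen_eq _ (subsetT _)); first by rewrite -gen_subG B4sy_astabs.
  by rewrite !imsetU !imset_set1 /= restr_beta12 restr_beta13 restr_beta14
    restr_P3 restr_eta23 restr_eta234.
by rewrite S4_gen6.
Qed.

Lemma restr_B4 : restr_perm Z @* B4 gT = psi @* <<[set v02_13; v03_12]>>.
Proof.
have [_ _ _ v12] := klein_S4.
have klein_gen3 : <<[set v02_13; v03_12; v01_23]>> = <<[set v02_13; v03_12]>>.
  apply/eqP; rewrite eqEsubset gen_subG genS ?subsetUl // andbT !subUset !sub1set.
  have gen_v02_13 : v02_13 \in <<[set v02_13; v03_12]>> by rewrite mem_gen // !inE eqxx.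
  have gen_v03_12 : v03_12 \in <<[set v02_13; v03_12]>> by rewrite mem_gen // !inE eqxx orbT.
  by rewrite gen_v02_13 gen_v03_12 -v12 (groupM gen_v02_13 gen_v03_12).
rewrite -klein_gen3; apply: (morphim_gen_eq _ (subsetT _)).
  by rewrite -gen_subG B4_astabs.
rewrite !imsetU !imset_set1 /= restr_beta12 restr_beta13 restr_beta14.
rewrite restr_beta23 restr_beta24 restr_beta34; apply/setP => p; rewrite !inE.
by case: (p == psi v02_13); case: (p == psi v03_12); case: (p == psi v01_23); rewrite ?orbT.
Qed.

Lemma injm_psi : 'injm psi.
Proof. exact/injm_transport/conj_cycles4_faithful. Qed.

Lemma isog_psi_S4 : psi @* [set: 'S_4] \isog [set: 'S_4].
Proof. by rewrite isog_sym sub_isog ?subsetT ?injm_psi. Qed.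

Lemma isog_B4sy : restr_perm Z @* B4sy gT \isog [set: 'S_4].
Proof. by rewrite restr_B4sy isog_psi_S4. Qed.

Lemma isog_Tgrp : restr_perm Z @* Tgrp gT \isog [set: 'S_4].
Proof. by rewrite restr_Tgrp isog_psi_S4. Qed.

Lemma isog_B4 : restr_perm Z @* B4 gT \isog [set: 'Z_2 * 'Z_2].
Proof.
have [vv1 vv2 cv _] := klein_S4; have /and3P[v1n v2n v12n] := klein_S4_neq.
rewrite restr_B4; apply: isog_trans (klein_four_isog vv1 vv2 cv v1n v2n v12n).
by rewrite isog_sym sub_isog ?subsetT ?injm_psi.
Qed.

Lemma even_B4 : {in B4 gT, forall p, ~~ odd_perm (restr_perm Z p)}.
Proof.
have [vv1 vv2 cv v12] := klein_S4.
move=> p B4p; have : restr_perm Z p \in restr_perm Z @* B4 gT.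
  by rewrite mem_morphim // (subsetP B4_astabs).
rewrite restr_B4 morphimEsub ?subsetT // klein_four_gen // v12.
case/imsetP=> c; rewrite !inE -!orbA => /or4P[]/eqP-> ->.
- by rewrite morph1 odd_perm1.
- by rewrite morphM ?inE // odd_perm_sqr.
- by rewrite morphM ?inE // odd_perm_sqr.
- by rewrite morphM ?inE // odd_perm_sqr.
Qed.

Lemma orbit_e1 : orbit 'P (B4sy gT) e1 = Z.
Proof.
have [= P31 P32 P33 _ _ _] := P3_on_Z; have [= H1 H2 _ _ _ _] := eta234_on_Z.
have P3B : P3 gT \in B4sy gT by rewrite mem_gen // !inE eqxx ?orbT.
have H234B : eta234 gT \in B4sy gT by rewrite mem_gen // !inE eqxx ?orbT.
have orbitB p : p \in B4sy gT -> p e1 \in orbit 'P (B4sy gT) e1.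
  by move=> Bp; rewrite -apermE mem_orbit.
apply/eqP; rewrite eqEsubset (acts_sub_orbit _ B4sy_astabs) !inE eqxx /=.
have O3 : e3 \in orbit 'P (B4sy gT) e1 by rewrite -P31 orbitB.
have O2 : e2 \in orbit 'P (B4sy gT) e1 by rewrite -P33 -P31 -permM orbitB ?groupM.
have O4 : e4 \in orbit 'P (B4sy gT) e1 by rewrite -P32 -P33 -P31 -!permM orbitB ?groupM.
have O5 : e5 \in orbit 'P (B4sy gT) e1 by rewrite -H2 -P33 -P31 -!permM orbitB ?groupM.
have O6 : e6 \in orbit 'P (B4sy gT) e1 by rewrite -H1 orbitB.
by rewrite !subUset !sub1set orbit_refl O2 O3 O4 O5 O6.
Qed.

Lemma ncycles_P3 : ncycles Z (P3 gT) = 3.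
Proof.
have [= P31 P32 P33 P34 P35 P36] := P3_on_Z.
have O3 : porbit (P3 gT) e3 = porbit (P3 gT) e1 by rewrite -P31 porbit_step.
have O2 : porbit (P3 gT) e2 = porbit (P3 gT) e1 by rewrite -P33 porbit_step.
have O4 : porbit (P3 gT) e4 = porbit (P3 gT) e1 by rewrite -P32 porbit_step.
have st5 : {in [set e5], forall z, P3 gT z \in [set e5]}.
  by move=> z /set1P->; rewrite P35 set11.
have st6 : {in [set e6], forall z, P3 gT z \in [set e6]}.
  by move=> z /set1P->; rewrite P36 set11.
rewrite /ncycles !imsetU !imset_set1 O2 O3 O4 !setUid card_set3 // eq_sym.
- by rewrite (porbit_stable_neq st5) ?set11 // inE Z_neq.
- by rewrite (porbit_stable_neq st6) ?set11 // inE Z_neq.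
- by rewrite (porbit_stable_neq st6) ?set11 // inE Z_neq.
Qed.

Lemma ncycles_eta23 : ncycles Z (eta23 gT) = 3.
Proof.
have [= E1 E2 E3 E4 E5 E6] := eta23_on_Z.
have O4 : porbit (eta23 gT) e4 = porbit (eta23 gT) e1 by rewrite -E1 porbit_step.
have O3 : porbit (eta23 gT) e3 = porbit (eta23 gT) e2 by rewrite -E2 porbit_step.
have O6 : porbit (eta23 gT) e6 = porbit (eta23 gT) e5 by rewrite -E5 porbit_step.
have st23 : {in [set e2; e3], forall z, eta23 gT z \in [set e2; e3]}.
  by move=> z /set2P[]->; rewrite ?E2 ?E3 !inE eqxx ?orbT.
have st56 : {in [set e5; e6], forall z, eta23 gT z \in [set e5; e6]}.
  by move=> z /set2P[]->; rewrite ?E5 ?E6 !inE eqxx ?orbT.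
rewrite /ncycles !imsetU !imset_set1 O3 O4 O6.
rewrite (_ : [set _; _; _; _; _; _] =
  [set porbit (eta23 gT) e1; porbit (eta23 gT) e2; porbit (eta23 gT) e5]); last first.
  apply/setP => X; rewrite !inE.
  by case: (X == porbit _ e1); case: (X == porbit _ e2); case: (X == porbit _ e5).
rewrite card_set3 // eq_sym.
- by rewrite (porbit_stable_neq st23) ?inE ?eqxx // !Z_neq.
- by rewrite (porbit_stable_neq st56) ?inE ?eqxx // !Z_neq.
- by rewrite (porbit_stable_neq st56) ?inE ?eqxx // !Z_neq.
Qed.

Lemma ncycles_eta234 : ncycles Z (eta234 gT) = 2.
Proof.
have [= E1 E2 E3 E4 E5 E6] := eta234_on_Z.
have O6 : porbit (eta234 gT) e6 = porbit (eta234 gT) e1 by rewrite -E1 porbit_step.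
have O4 : porbit (eta234 gT) e4 = porbit (eta234 gT) e1 by rewrite -E6 porbit_step.
have O5 : porbit (eta234 gT) e5 = porbit (eta234 gT) e2 by rewrite -E2 porbit_step.
have O3 : porbit (eta234 gT) e3 = porbit (eta234 gT) e2 by rewrite -E5 porbit_step.
have st253 : {in [set e2; e5; e3], forall z, eta234 gT z \in [set e2; e5; e3]}.
  by move=> z; rewrite !inE -!orbA => /or3P[]/eqP->; rewrite ?E2 ?E3 ?E5 eqxx ?orbT.
rewrite /ncycles !imsetU !imset_set1 O3 O4 O5 O6.
rewrite (_ : [set _; _; _; _; _; _] = [set porbit (eta234 gT) e1; porbit (eta234 gT) e2]).
  by rewrite cards2 eq_sym (porbit_stable_neq st253) ?inE ?eqxx // !Z_neq.
apply/setP => X; rewrite !inE.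
by case: (X == porbit _ e1); case: (X == porbit _ e2).
Qed.

Lemma genus_Z :
  genus #|Z| (ncycles Z (P3 gT)) (ncycles Z (eta23 gT)) (ncycles Z (eta234 gT)) = 0%R.
Proof. by rewrite card_Z ncycles_P3 ncycles_eta23 ncycles_eta234 /genus; apply/eqP. Qed.

End Orbit.

Theorem theorem3 (gT : finGroupType) (G : {group gT}) (s1 s2 : gT) :
  G :!=: 1 -> 'Z(G) = 1 ->
  <<[set s1; s2]>> = G -> #[s1 * s2] = 2%N -> s2 \in s1 ^: G ->
  let C := s1 ^: G in
  let e1 := cls G (s1, s1, s2, s1 * s2 * s1^-1) in
  let e2 := cls G (s1, s2 * s1 * s2^-1, s2, s2) in
  let e3 := cls G (s1, s2, s1, s2) in
  let e4 := cls G (s1, s2, s2^-1 * s1 * s2, s1 * s2 * s1^-1) in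
  let e5 := cls G (s1, s2, s2, s2^-1 * s1 * s2) in
  let e6 := cls G (s1, s2, s1 * s2 * s1^-1, s1) in
  let Z := [set e1; e2; e3; e4; e5; e6] in
  [/\ [/\ Z \subset Sigma G C, #|Z| = 6%N & orbit 'P (B4sy gT) e1 = Z],
      [/\ map (beta12 gT) [:: e1; e2; e3; e4; e5; e6] = [:: e1; e2; e4; e3; e6; e5],
          map (beta13 gT) [:: e1; e2; e3; e4; e5; e6] = [:: e2; e1; e3; e4; e6; e5]
        & map (beta14 gT) [:: e1; e2; e3; e4; e5; e6] = [:: e2; e1; e4; e3; e5; e6]],
      [/\ map (P3 gT) [:: e1; e2; e3; e4; e5; e6] = [:: e3; e4; e2; e1; e5; e6],
          map (eta23 gT) [:: e1; e2; e3; e4; e5; e6] = [:: e4; e3; e2; e1; e6; e5]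
        & map (eta234 gT) [:: e1; e2; e3; e4; e5; e6] = [:: e6; e5; e2; e1; e3; e4]],
      [/\ restr_perm Z @* B4 gT \isog [set: 'Z_2 * 'Z_2],
          {in B4 gT, forall p, ~~ odd_perm (restr_perm Z p)},
          restr_perm Z @* B4sy gT \isog [set: 'S_4]
        & restr_perm Z @* Tgrp gT \isog [set: 'S_4]]
    & genus #|Z| (ncycles Z (P3 gT)) (ncycles Z (eta23 gT)) (ncycles Z (eta234 gT)) = 0%R].
Proof.
move=> nt ZG genG o2 s2C.
have s1G : s1 \in G by rewrite -genG mem_gen // !inE eqxx.
have s2G : s2 \in G by rewrite -genG mem_gen // !inE eqxx orbT.
have nc12 := gen2_center1_noncommuting genG ZG nt.
have [t [tG tt1 s2E]] : exists t, [/\ t \in G, t * t = 1 & s2 = s1^-1 * t].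
  exists (s1 * s2); rewrite groupM // mulKg; split=> //.
  by have := expg_order (s1 * s2); rewrite o2 expgS expg1.
subst s2; have nc : s1 * t != t * s1.
  by apply: contra nc12 => /eqP ct; rewrite mulKVg -mulgA -ct mulKg.
move=> C e1 e2 e3 e4 e5 e6 Z; split.
- by split; [apply: Z_sub_Sigma | apply: card_Z | apply: orbit_e1].
- by split; [apply: beta12_on_Z | apply: beta13_on_Z | apply: beta14_on_Z].
- by split; [apply: P3_on_Z | apply: eta23_on_Z | apply: eta234_on_Z].
- by split; [apply: isog_B4 | apply: even_B4 | apply: isog_B4sy | apply: isog_Tgrp].
- by apply: genus_Z.
Qed.
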